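(* Let $\mathfrak p,\mathfrak q$ be positive integers, $\omega=\mathfrak p/\mathfrak q$, $\nu=1/\mathfrak q$, and $\varepsilon=\omega^{2/(\alpha+1)}$. Then the function $$h(x,\tau)=\sum_{j=1}^n m_j\big[\phi_\alpha(\|x-\varepsilon x_j(\tau)\|)-\phi_\alpha(\|x\|)\big],\qquad x_j(\tau)=e^{-J\omega\tau/\nu}q_j(\tau/\nu),$$ is $2\pi$-periodic in $\tau$, and $\nabla_xh(x,\tau)=\mathcal O(\varepsilon^2)$.
   Context: Let $n\ge2$, $\alpha\ge1$, masses $m_1,\dots,m_n>0$ with $\sum_j m_j=1$, and let $q_1,\dots,q_n:\mathbb R\to\mathbb R^2$ be a collision-free $2\pi$-periodic solution of the $n$-body problem $\ddot q_j=-\sum_{k\ne j}m_k\frac{q_j-q_k}{\|q_j-q_k\|^{\alpha+1}}$ with center of mass $\sum_jm_jq_j(t)=0$. $\phi_\alpha(\lambda)=\frac1{\alpha-1}\lambda^{1-\alpha}$ for $\alpha>1$, $\phi_1(\lambda)=-\log\lambda$. $J=\begin{pmatrix}0&1\\-1&0\end{pmatrix}$, $e^{J\theta}=\cos\theta\,I+\sin\theta\,J$. The estimate $\mathcal O(\varepsilon^2)$ is meant as $\varepsilon\to0$, uniformly in $\tau$ and in $x$ ranging over compact subsets of $\mathbb R^2\setminus\{0\}$. *)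

From HB Require Import structures.
From mathcomp Require Import all_boot all_order all_algebra.
From mathcomp Require Import all_classical all_reals all_analysis.
Set Implicit Arguments. Unset Strict Implicit. Unset Printing Implicit Defensive.
Import Order.TTheory GRing.Theory Num.Theory.
Local Open Scope ring_scope.
Local Open Scope classical_set_scope.

Section Defs.
Variable R : realType.

Definition enorm (a b : R) : R := Num.sqrt (a ^+ 2 + b ^+ 2).

Definition phi (alpha lam : R) : R :=
  if alpha == 1 then - ln lam else (alpha - 1)^-1 * (lam `^ (1 - alpha)).

(* e^{J theta} (a,b) with J = [[0,1],[-1,0]], e^{J theta} = cos theta I + sin theta J *)
Definition rotJ1 (theta a b : R) : R := cos theta * a + sin theta * b.
Definition rotJ2 (theta a b : R) : R := - sin theta * a + cos theta * b.

Definition omega (p q : nat) : R := p%:R / q%:R.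
Definition nu (q : nat) : R := 1 / q%:R.
Definition eps (alpha : R) (p q : nat) : R := omega p q `^ (2 / (alpha + 1)).

Definition xj1 (q1 q2 : R -> R) (p q : nat) (tau : R) : R :=
  rotJ1 (- (omega p q * tau / nu q)) (q1 (tau / nu q)) (q2 (tau / nu q)).
Definition xj2 (q1 q2 : R -> R) (p q : nat) (tau : R) : R :=
  rotJ2 (- (omega p q * tau / nu q)) (q1 (tau / nu q)) (q2 (tau / nu q)).

Definition hfun (n : nat) (alpha : R) (m : 'I_n -> R) (q1 q2 : 'I_n -> R -> R)
  (p q : nat) (x : R * R) (tau : R) : R :=
  \sum_(j < n) m j *
    (phi alpha (enorm (x.1 - eps alpha p q * xj1 (q1 j) (q2 j) p q tau)
                      (x.2 - eps alpha p q * xj2 (q1 j) (q2 j) p q tau))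
     - phi alpha (enorm x.1 x.2)).

End Defs.

From HB Require Import structures.
From mathcomp Require Import all_boot all_order all_algebra.
From mathcomp Require Import all_classical all_reals all_analysis.
From mathcomp Require Import ring lra.
Set Implicit Arguments. Unset Strict Implicit. Unset Printing Implicit Defensive.
Import Order.TTheory GRing.Theory Num.Theory.
Import numFieldNormedType.Exports.
Local Open Scope ring_scope.
Local Open Scope classical_set_scope.

(* Shifting tau by 2 pi shifts the time tau / nu of the bodies by 2 pi q and the
   rotation angle by - 2 pi p, so h is 2 pi-periodic in tau.
   Write F for minus the gradient of phi_alpha(|.|), so that
   grad_x h = sum_j m_j (F x - F (x - eps x_j)).  Expanding to first order, the
   terms eps DF(x) x_j are linear in x_j and their m-weighted sum vanishes, since
   sum_j m_j x_j(tau) is a rotation of the centre of mass sum_j m_j q_j = 0.  The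
   remainders are O(eps^2) uniformly: x ranges over a compact set with |x|^2 >= A > 0,
   the x_j(tau) are bounded since the q_j are continuous and periodic, so for eps
   small |x - eps x_j|^2 >= A / 2, and all that is needed is a second-order
   mean-value estimate for w ^ (- (alpha + 1) / 2) on [A / 2, +oo). *)

Section Periodicity.
Context {R : realType}.
Implicit Types (f : R -> R) (T : R).

Lemma periodicNn f T : periodic f T -> forall n a, f (a - T *+ n) = f a.
Proof. by move=> fT n a; rewrite -[in RHS](subrK (T *+ n) a) periodicn. Qed.

Lemma periodicz f T : periodic f T -> forall (k : int) a, f (a + T *~ k) = f a.
Proof.
move=> fT [k|k] a; first exact: periodicn.
by rewrite NegzE mulrNz periodicNn.
Qed.

Lemma periodic_bounded f T : 0 < T -> continuous f -> periodic f T ->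
  exists B, forall t, `|f t| <= B.
Proof.
move=> T0 fc fT.
have nfc : {within `[0, T], continuous (fun t => `|f t|)}.
  by apply: continuous_subspaceT => t; apply: continuous_comp (fc t) _; exact: norm_continuous.
have [c _ cmax] := EVT_max (ltW T0) nfc.
exists `|f c| => t; set k := Num.floor (t / T).
rewrite -(periodicz fT (- k)) mulrNz; apply: cmax.
have /andP[kt tk] := floor_itv (t / T).
rewrite -/k in kt tk; rewrite intrD ler_pdivlMr // ltr_pdivrMr // in kt tk.
by rewrite in_itv /= -mulrzr subr_ge0 mulrC kt /=; lra.
Qed.

Lemma periodic_family_bounded n (f : 'I_n -> R -> R) (T : R) : 0 < T ->
  (forall j, continuous (f j)) -> (forall j, periodic (f j) T) ->
  exists2 B, 0 <= B & forall j t, `|f j t| <= B.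
Proof.
move=> T0 fc fT; have [B fB] := choice (fun j => periodic_bounded T0 (fc j) (fT j)).
exists (\sum_j `|B j|) => [|j t]; first exact: sumr_ge0.
apply: le_trans (fB j t) _; apply: le_trans (ler_norm _) _.
by rewrite (bigD1 j) //= lerDl sumr_ge0.
Qed.

End Periodicity.

Lemma hfun_periodic {R : realType} n alpha (m : 'I_n -> R) q1 q2 (p q : nat) x :
  (0 < q)%N -> (forall j, periodic (q1 j) (2 * pi)) ->
  (forall j, periodic (q2 j) (2 * pi)) ->
  periodic (hfun alpha m q1 q2 p q x) (2 * pi).
Proof.
move=> q_gt0 q1P q2P tau; apply: eq_bigr => j _; rewrite /xj1 /xj2.
have qR0 : q%:R != 0 :> R by rewrite pnatr_eq0 -lt0n.
have -> : (tau + 2 * pi) / nu R q = tau / nu R q + (2 * pi) *+ q.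
  by rewrite -mulr_natr /nu; field.
have -> : - (omega R p q * (tau + 2 * pi) / nu R q) =
          - (omega R p q * tau / nu R q) - (2 * pi) *+ p.
  by rewrite -mulr_natr /nu /omega; field.
have cosP : periodic (@cos R) (2 * pi) by rewrite mulr_natl; exact: cosD2pi.
have sinP : periodic (@sin R) (2 * pi) by rewrite mulr_natl; exact: sinD2pi.
by rewrite /rotJ1 /rotJ2 (periodicn (q1P j)) (periodicn (q2P j))
  (periodicNn cosP) (periodicNn sinP).
Qed.

Section Rotation.
Context {R : realType}.

Lemma norm_rotJ1_le (th u v : R) : `|rotJ1 th u v| <= `|u| + `|v|.
Proof.
apply: le_trans (ler_normD _ _) _.
by rewrite !normrM lerD // ler_piMl // ?cos_max ?sin_max.
Qed.

Lemma norm_rotJ2_le (th u v : R) : `|rotJ2 th u v| <= `|u| + `|v|.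
Proof.
apply: le_trans (ler_normD _ _) _.
by rewrite !normrM normrN lerD // ler_piMl // ?cos_max ?sin_max.
Qed.

End Rotation.

Section SquaredNorm.
Context {R : realType}.

Definition sqnorm (u1 u2 : R) : R := u1 ^+ 2 + u2 ^+ 2.

Lemma sqnorm_ge0 (u1 u2 : R) : 0 <= sqnorm u1 u2.
Proof. by rewrite addr_ge0 ?sqr_ge0. Qed.

Lemma sqr_le_norm (u Y : R) : `|u| <= Y -> u ^+ 2 <= Y ^+ 2.
Proof.
move=> uY; rewrite -real_normK ?num_real // ler_sqr ?nnegrE //.
exact: le_trans uY.
Qed.

Lemma sqnorm_le (u1 u2 Y : R) : `|u1| <= Y -> `|u2| <= Y -> sqnorm u1 u2 <= 2 * Y ^+ 2.
Proof. by move=> /sqr_le_norm u1Y /sqr_le_norm u2Y; rewrite /sqnorm; lra. Qed.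

Lemma enorm_le_normD (u v : R) : enorm u v <= `|u| + `|v|.
Proof.
have : u ^+ 2 + v ^+ 2 <= (`|u| + `|v|) ^+ 2.
  rewrite sqrrD -(real_normK (num_real u)) -(real_normK (num_real v)).
  by rewrite -addrA lerD2l lerDr mulrn_wge0 // mulr_ge0.
by move/ler_wsqrtr; rewrite sqrtr_sqr ger0_norm // addr_ge0.
Qed.

Lemma compact_sqnorm_bounds (K : set (R^o * R^o)%type) : compact K -> ~ K (0, 0) ->
  exists X A : R, [/\ 0 <= X, 0 < A &
    forall x, K x -> [/\ `|x.1| <= X, `|x.2| <= X & A <= sqnorm x.1 x.2]].
Proof.
move=> cK K0; have [[x0 Kx0]|K_empty] := pselect (exists x, K x); last first.
  by exists 0, 1; split=> // x Kx; exfalso; apply: K_empty; exists x.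
pose f (x : R^o * R^o) : R := sqnorm x.1 x.2.
have fc : {within K, continuous f}.
  apply: continuous_subspaceT => x; apply: cvgD; apply: cvgM;
    [exact: cvg_fst | exact: cvg_fst | exact: cvg_snd | exact: cvg_snd].
have [c Kc cmin] := compact_EVT_min (ex_intro _ x0 Kx0) cK fc.
have [c' _ cmax] := compact_EVT_max (ex_intro _ x0 Kx0) cK fc.
have fc0 : 0 < f c.
  rewrite lt_def sqnorm_ge0 andbT; apply/negP.
  rewrite /f /sqnorm paddr_eq0 ?sqr_ge0 // !sqrf_eq0 => /andP[/eqP c1 /eqP c2].
  by apply: K0; move: Kc; rewrite inE; case: c {cmin} c1 c2 => /= ? ? -> ->.
(* |u| <= 1 + u ^+ 2, so 1 + max_K f bounds the coordinates *)
exists (1 + f c'), (f c); split=> // [|x Kx]; first by rewrite addr_ge0 ?sqnorm_ge0.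
have := cmin x; have := cmax x; rewrite inE => /(_ Kx) xc' /(_ Kx) xc.
move: xc'; rewrite /f /sqnorm !ler_norml => xc'.
have s1 := sqr_ge0 (x.1 : R); have s2 := sqr_ge0 (x.2 : R).
by split=> //; apply/andP; split; nra.
Qed.

End SquaredNorm.

Section PowerEstimates.
Context {R : realType}.

Lemma MVT_minmax (f df : R -> R) (u v : R) :
  (forall x, x \in `[Num.min u v, Num.max u v]%R -> is_derive x 1 f (df x)) ->
  exists2 c, c \in `[Num.min u v, Num.max u v]%R & f v - f u = df c * (v - u).
Proof.
wlog uv : u v / u <= v => [sym|].
  case/orP: (le_total u v) => [|vu]; first exact: sym.
  rewrite minC maxC => /(sym _ _ vu)[c cI fvu].
  by exists c => //; rewrite -opprB fvu -mulrN opprB.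
rewrite (min_idPl uv) (max_idPr uv) => fdf.
have fdf' x : x \in `]u, v[%R -> is_derive x 1 f (df x).
  by move=> xI; apply: fdf; rewrite subset_itv_oo_cc.
have fcont : {within `[u, v], continuous f}.
  by apply: derivable_within_continuous => x xI; case: (fdf x xI).
exact: MVT_segment uv fdf' fcont.
Qed.

Lemma dist_itv_minmax (u v c : R) :
  c \in `[Num.min u v, Num.max u v]%R -> `|c - u| <= `|v - u|.
Proof.
rewrite in_itv /=; case: (leP u v) => uv /andP[lc cr].
  rewrite !ger0_norm ?subr_ge0 //; lra.
rewrite !ler0_norm ?subr_le0 ?(ltW uv) //; lra.
Qed.

Lemma itv_minmax_lb (A u v c : R) : A <= u -> A <= v ->
  c \in `[Num.min u v, Num.max u v]%R -> A <= c.
Proof.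
by move=> Au Av; rewrite in_itv /= => /andP[+ _]; apply: le_trans; rewrite le_min Au Av.
Qed.

Lemma is_derive_powRN (b w : R) : 0 < w ->
  is_derive w 1 (fun x : R => x `^ (- b)) (- b * w `^ (- (b + 1))).
Proof.
by move=> w0; apply: is_derive_eq; [exact: is_derive1_powR | rewrite opprD].
Qed.

Lemma powRN_le (b A w : R) : 0 <= b -> 0 < A -> A <= w -> w `^ (- b) <= A `^ (- b).
Proof.
move=> b0 A0 Aw; have w0 := lt_le_trans A0 Aw.
rewrite !powRN lef_pV2 ?posrE ?powR_gt0 //.
by apply: ge0_ler_powR; rewrite // nnegrE ltW.
Qed.

Lemma powRN_lipschitz (b A u v : R) : 0 <= b -> 0 < A -> A <= u -> A <= v ->
  `|v `^ (- b) - u `^ (- b)| <= b * A `^ (- (b + 1)) * `|v - u|.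
Proof.
move=> b0 A0 Au Av.
have [c cI ->] := @MVT_minmax (fun x => x `^ (- b)) (fun x => - b * x `^ (- (b + 1))) u v
  (fun x xI => is_derive_powRN b (lt_le_trans A0 (itv_minmax_lb Au Av xI))).
rewrite !normrM normrN (ger0_norm b0) (ger0_norm (powR_ge0 _ _)).
rewrite ler_wpM2r // ler_wpM2l // powRN_le ?addr_ge0 //.
exact: itv_minmax_lb Au Av cI.
Qed.

Lemma powRN_taylor2 (b A a d : R) : 0 <= b -> 0 < A -> A <= a -> A <= a + d ->
  `|(a + d) `^ (- b) - a `^ (- b) + b * a `^ (- (b + 1)) * d|
    <= b * (b + 1) * A `^ (- (b + 2)) * d ^+ 2.
Proof.
move=> b0 A0 Aa Aad.
have [c cI ->] := @MVT_minmax (fun x => x `^ (- b)) (fun x => - b * x `^ (- (b + 1))) a (a + d)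
  (fun x xI => is_derive_powRN b (lt_le_trans A0 (itv_minmax_lb Aa Aad xI))).
have Ac : A <= c := itv_minmax_lb Aa Aad cI.
have dc : `|c - a| <= `|d| by have := dist_itv_minmax cI; rewrite [a + d]addrC addrK.
rewrite [a + d]addrC addrK.
rewrite (_ : _ + _ = - (b * (c `^ (- (b + 1)) - a `^ (- (b + 1))) * d)); last by ring.
rewrite normrN !normrM ger0_norm // -real_normK ?num_real // -!mulrA ler_wpM2l //.
have := powRN_lipschitz (addr_ge0 b0 ler01) A0 Aa Ac.
rewrite (_ : - (b + 1 + 1) = - (b + 2)); last by ring.
move=> lip; rewrite expr2 !mulrA ler_wpM2r //; apply: le_trans lip _.
by rewrite ler_wpM2l // mulr_ge0 ?addr_ge0 ?powR_ge0.
Qed.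

End PowerEstimates.

Section WeightedSums.
Context {R : numDomainType} (n : nat) (m : 'I_n -> R).

Lemma weighted_sum_comb0 (u v : 'I_n -> R) (a c : R) :
  \sum_(j < n) m j * u j = 0 -> \sum_(j < n) m j * v j = 0 ->
  \sum_(j < n) m j * (a * u j + c * v j) = 0.
Proof.
move=> mu mv; under eq_bigr do rewrite mulrDr mulrCA [m _ * (c * _)]mulrCA.
by rewrite big_split /= -!mulr_sumr mu mv !mulr0 addr0.
Qed.

Lemma norm_weighted_sum_le (T L : 'I_n -> R) (C : R) :
  (forall j, 0 <= m j) -> \sum_(j < n) m j = 1 -> \sum_(j < n) m j * L j = 0 ->
  (forall j, `|T j - L j| <= C) -> `|\sum_(j < n) m j * T j| <= C.
Proof.
move=> m0 m1 mL TL.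
have -> : \sum_(j < n) m j * T j = \sum_(j < n) m j * (T j - L j).
  by under [RHS]eq_bigr do rewrite mulrBr; rewrite sumrB mL subr0.
apply: le_trans (ler_norm_sum _ _ _) _; rewrite -[C]mul1r -m1 mulr_suml.
by apply: ler_sum => j _; rewrite normrM ger0_norm // ler_wpM2l.
Qed.

End WeightedSums.

Section ForceExpansion.
Context {R : realType}.

(* [- force ((alpha + 1) / 2) u1 u2] is the partial derivative of phi_alpha(|u|) in u1,
   and [dforce b x1 x2 y1 y2] is the derivative of [force b] at x in the direction y. *)
Definition force (b u1 u2 : R) : R := u1 * sqnorm u1 u2 `^ (- b).

Definition dforce (b x1 x2 y1 y2 : R) : R :=
  y1 * sqnorm x1 x2 `^ (- b)
  - 2 * b * sqnorm x1 x2 `^ (- (b + 1)) * x1 * (x1 * y1 + x2 * y2).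

Lemma weighted_sum_dforce0 n (m u1 u2 : 'I_n -> R) (b e x1 x2 : R) :
  \sum_(j < n) m j * u1 j = 0 -> \sum_(j < n) m j * u2 j = 0 ->
  \sum_(j < n) m j * (e * dforce b x1 x2 (u1 j) (u2 j)) = 0.
Proof.
move=> mu1 mu2; pose k := 2 * b * sqnorm x1 x2 `^ (- (b + 1)) * x1.
rewrite -[RHS](weighted_sum_comb0 (e * (sqnorm x1 x2 `^ (- b) - k * x1)) (- (e * k * x2))
  mu1 mu2).
by apply: eq_bigr => j _; rewrite /dforce /k; ring.
Qed.

Lemma sqnorm_sub_dist (X Y e x1 x2 y1 y2 : R) : 0 <= e <= 1 ->
  `|x1| <= X -> `|x2| <= X -> `|y1| <= Y -> `|y2| <= Y ->
  `|sqnorm (x1 - e * y1) (x2 - e * y2) - sqnorm x1 x2| <= e * (4 * X * Y + 2 * Y ^+ 2).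
Proof.
move=> /andP[e0 e1] x1X x2X y1Y y2Y.
have -> : sqnorm (x1 - e * y1) (x2 - e * y2) - sqnorm x1 x2 =
          e * (e * sqnorm y1 y2 - 2 * (x1 * y1 + x2 * y2)) by rewrite /sqnorm; ring.
rewrite normrM ger0_norm // ler_wpM2l //.
have y0 := sqnorm_ge0 y1 y2; have yY := sqnorm_le y1Y y2Y.
have xy : `|x1 * y1 + x2 * y2| <= 2 * (X * Y).
  by apply: le_trans (ler_normD _ _) _; rewrite !normrM mulr2n mulrDl mul1r lerD // ler_pM.
apply: le_trans (ler_normB _ _) _.
rewrite ger0_norm ?mulr_ge0 // normrM ger0_norm //.
have : e * sqnorm y1 y2 <= sqnorm y1 y2 by rewrite ler_piMl.
lra.
Qed.

Lemma force_expansion (b A X Y : R) : 0 <= b -> 0 < A -> 0 <= X -> 0 <= Y ->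
  exists C delta, 0 < delta /\ forall e x1 x2 y1 y2, 0 <= e < delta ->
    A <= sqnorm x1 x2 -> `|x1| <= X -> `|x2| <= X -> `|y1| <= Y -> `|y2| <= Y ->
    A / 2 <= sqnorm (x1 - e * y1) (x2 - e * y2) /\
    `|force b x1 x2 - force b (x1 - e * y1) (x2 - e * y2) - e * dforce b x1 x2 y1 y2|
      <= C * e ^+ 2.
Proof.
move=> b0 A0 X0 Y0; pose D := 4 * X * Y + 2 * Y ^+ 2.
have D0 : 0 <= D by rewrite addr_ge0 ?mulr_ge0 ?sqr_ge0.
have D1 : 0 < D + 1 by lra.
have A2 : 0 < A / 2 by rewrite divr_gt0.
pose L1 := b * (A / 2) `^ (- (b + 1)); pose L2 := b * (b + 1) * (A / 2) `^ (- (b + 2)).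
(* delta forces e <= 1 and e * D <= A / 2 *)
exists (X * (L2 * D ^+ 2 + L1 * (2 * Y ^+ 2)) + Y * (L1 * D)), (Num.min 1 (A / (2 * (D + 1)))).
split; first by rewrite lt_min ltr01 /= divr_gt0 ?mulr_gt0.
move=> e x1 x2 y1 y2 /andP[e0]; rewrite lt_min => /andP[e1 eA] Ax x1X x2X y1Y y2Y.
have eD : e * D <= A / 2.
  move: eA; rewrite ltr_pdivlMr ?mulr_gt0 // => eA.
  have : e * D <= e * (D + 1) by rewrite ler_wpM2l // lerDl.
  lra.
set N := sqnorm x1 x2 in Ax *; set N' := sqnorm (x1 - e * y1) (x2 - e * y2).
have dN : `|N' - N| <= e * D by apply: sqnorm_sub_dist => //; rewrite e0 ltW.
have AN : A / 2 <= N by lra.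
have AN' : A / 2 <= N' by move: dN; rewrite ler_norml => /andP[dN _]; lra.
split=> //.
(* Second-order Taylor remainder of w ^ (- b) at N, a cross term, and the e^2 part of
   N' - N; each is O(e^2) because |N' - N| <= e * D. *)
have -> : force b x1 x2 - force b (x1 - e * y1) (x2 - e * y2) - e * dforce b x1 x2 y1 y2 =
    - (x1 * (N' `^ (- b) - N `^ (- b) + b * N `^ (- (b + 1)) * (N' - N))
       - e * y1 * (N' `^ (- b) - N `^ (- b))
       - e ^+ 2 * (b * N `^ (- (b + 1)) * x1 * sqnorm y1 y2)).
  have -> : N' - N = e * (e * sqnorm y1 y2 - 2 * (x1 * y1 + x2 * y2)).
    by rewrite /N' /N /sqnorm; ring.
  by rewrite /force /dforce -/N -/N'; ring.
have taylor : `|x1 * (N' `^ (- b) - N `^ (- b) + b * N `^ (- (b + 1)) * (N' - N))|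
    <= X * (L2 * (e * D) ^+ 2).
  rewrite normrM ler_pM //; have := powRN_taylor2 b0 A2 AN (_ : A / 2 <= N + (N' - N)).
  rewrite subrKC => /(_ AN') /le_trans; apply.
  rewrite ler_wpM2l ?mulr_ge0 ?addr_ge0 ?powR_ge0 //.
  by apply: sqr_le_norm.
have lip : `|e * y1 * (N' `^ (- b) - N `^ (- b))| <= e * Y * (L1 * (e * D)).
  rewrite normrM normrM ger0_norm // ler_pM ?mulr_ge0 // ?ler_wpM2l //.
  apply: le_trans (powRN_lipschitz b0 A2 AN AN') _.
  by rewrite ler_wpM2l ?mulr_ge0 ?powR_ge0.
have quad : `|e ^+ 2 * (b * N `^ (- (b + 1)) * x1 * sqnorm y1 y2)|
    <= e ^+ 2 * (L1 * (X * (2 * Y ^+ 2))).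
  rewrite normrM ger0_norm ?sqr_ge0 // ler_wpM2l ?sqr_ge0 //.
  rewrite !normrM (ger0_norm b0) (ger0_norm (powR_ge0 _ _)) (ger0_norm (sqnorm_ge0 _ _)).
  rewrite /L1 -!mulrA ler_wpM2l // ler_pM ?powR_ge0 ?mulr_ge0 ?sqnorm_ge0 //.
    exact: powRN_le (addr_ge0 b0 ler01) A2 AN.
  by rewrite ler_pM ?sqnorm_ge0 // sqnorm_le.
rewrite normrN; apply: le_trans (ler_normB _ _) _.
apply: le_trans (lerD (ler_normB _ _) quad) _.
apply: le_trans (lerD (lerD taylor lip) (lexx _)) _.
by rewrite le_eqVlt; apply/orP; left; apply/eqP; ring.
Qed.

End ForceExpansion.

Section PotentialDerivative.
Context {R : realType}.
Variable alpha : R.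
Local Notation b := ((alpha + 1) / 2).

Definition phi_sq (w : R) : R :=
  if alpha == 1 then - (ln w / 2) else (alpha - 1)^-1 * w `^ ((1 - alpha) / 2).

Lemma phi_sqrt (w : R) : 0 <= w -> phi alpha (Num.sqrt w) = phi_sq w.
Proof.
move=> w0; rewrite /phi /phi_sq -powR12_sqrt //.
by case: ifP => _; [rewrite ln_powR mulrC | rewrite -powRrM [2^-1 * _]mulrC].
Qed.

Lemma is_derive_phi_sq (w : R) : 0 < w -> is_derive w 1 phi_sq (- 2^-1 * w `^ (- b)).
Proof.
move=> w0; rewrite /phi_sq; case: eqP => [->|/eqP alpha1].
  rewrite (_ : - ((1 + 1) / 2) = -1); last by field.
  rewrite powR_inv1 ?ltW //.
  have -> : (fun u : R => - (ln u / 2)) = (fun u => - 2^-1 * ln u).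
    by apply/funext => u; rewrite mulNr mulrC.
  exact: is_deriveZ (is_derive1_ln w0).
apply: is_derive_eq; first exact: is_deriveZ (is_derive1_powR _ w0).
rewrite (_ : (1 - alpha) / 2 - 1 = - b); last by field.
by rewrite /GRing.scale /=; field; rewrite subr_eq0.
Qed.

Lemma is_derive_sqnorm_shift (c d s : R) :
  is_derive s 1 (fun u => sqnorm (u - c) d) (2 * (s - c)).
Proof.
have -> : (fun u => sqnorm (u - c) d) = (id - cst c) * (id - cst c) + cst (d ^+ 2).
  by apply/funext => u; rewrite /sqnorm /= expr2.
by apply: is_derive_eq; rewrite /= subr0 addr0 /GRing.scale /= mulr1 mulr_natl mulr2n.
Qed.

Lemma is_derive_phi_enorm (c d s : R) : 0 < sqnorm (s - c) d ->
  is_derive s 1 (fun u => phi alpha (enorm (u - c) d)) (- force b (s - c) d).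
Proof.
move=> N0; have -> : (fun u => phi alpha (enorm (u - c) d)) =
    phi_sq \o (fun u => sqnorm (u - c) d).
  by apply/funext => u; rewrite /= /enorm phi_sqrt // sqnorm_ge0.
apply: is_derive_eq; first exact: (@is_derive1_comp _ phi_sq _ s _ _ (is_derive_phi_sq N0)
  (is_derive_sqnorm_shift c d s)).
by rewrite /force; field.
Qed.

End PotentialDerivative.

Section RelativePotential.
Context {R : realType}.
Variable alpha : R.
Local Notation b := ((alpha + 1) / 2).

(* [hfun alpha m q1 q2 p q x tau] unfolds to [relpot m c1 c2 x] with c_j = eps x_j(tau). *)
Definition relpot n (m c1 c2 : 'I_n -> R) (x : R * R) : R :=
  \sum_(j < n) m j * (phi alpha (enorm (x.1 - c1 j) (x.2 - c2 j)) - phi alpha (enorm x.1 x.2)).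

Lemma relpot_swap n (m c1 c2 : 'I_n -> R) (x1 x2 : R) :
  relpot m c1 c2 (x1, x2) = relpot m c2 c1 (x2, x1).
Proof.
have enormC (u v : R) : enorm u v = enorm v u by rewrite /enorm addrC.
by apply: eq_bigr => j _; rewrite /= enormC [enorm x1 x2]enormC.
Qed.

Lemma is_derive_relpot1 n (m c1 c2 : 'I_n -> R) (x : R * R) :
  0 < sqnorm x.1 x.2 -> (forall j, 0 < sqnorm (x.1 - c1 j) (x.2 - c2 j)) ->
  is_derive x.1 1 (fun s => relpot m c1 c2 (s, x.2))
    (\sum_(j < n) m j * (force b x.1 x.2 - force b (x.1 - c1 j) (x.2 - c2 j))).
Proof.
move=> x0 xc0; rewrite /relpot /=.
have phi0 : is_derive x.1 1 (fun s => phi alpha (enorm s x.2)) (- force b x.1 x.2).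
  have := @is_derive_phi_enorm _ alpha 0 x.2 x.1; rewrite subr0 => /(_ x0).
  by under [X in is_derive _ _ X]funext => s do rewrite subr0.
have := is_derive_sum (fun j =>
  is_deriveZ (m j) (is_deriveB (is_derive_phi_enorm alpha (xc0 j)) phi0)).
rewrite fct_sumE => /is_derive_eq; apply; apply: eq_bigr => j _.
by rewrite /GRing.scale /=; ring.
Qed.

Lemma is_derive_relpot2 n (m c1 c2 : 'I_n -> R) (x : R * R) :
  0 < sqnorm x.1 x.2 -> (forall j, 0 < sqnorm (x.1 - c1 j) (x.2 - c2 j)) ->
  is_derive x.2 1 (fun s => relpot m c1 c2 (x.1, s))
    (\sum_(j < n) m j * (force b x.2 x.1 - force b (x.2 - c2 j) (x.1 - c1 j))).
Proof.
move=> x0 xc0; under [X in is_derive _ _ X]funext => s do rewrite relpot_swap.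
apply: (@is_derive_relpot1 _ m c2 c1 (x.2, x.1)) => [|j]; rewrite /sqnorm addrC.
  exact: x0.
exact: xc0.
Qed.

Lemma relpot_grad_small (A X Y : R) : -1 <= alpha -> 0 < A -> 0 <= X -> 0 <= Y ->
  exists C delta, 0 < delta /\
  forall n (m y1 y2 : 'I_n -> R) (e : R) (x : R * R),
    (forall j, 0 <= m j) -> \sum_(j < n) m j = 1 ->
    \sum_(j < n) m j * y1 j = 0 -> \sum_(j < n) m j * y2 j = 0 ->
    (forall j, `|y1 j| <= Y /\ `|y2 j| <= Y) -> 0 <= e < delta ->
    `|x.1| <= X -> `|x.2| <= X -> A <= sqnorm x.1 x.2 ->
    let U := relpot m (fun j => e * y1 j) (fun j => e * y2 j) in
    derivable (fun s => U (s, x.2)) x.1 1 /\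
    derivable (fun s => U (x.1, s)) x.2 1 /\
    enorm (derive1 (fun s => U (s, x.2)) x.1) (derive1 (fun s => U (x.1, s)) x.2)
      <= C * e ^+ 2.
Proof.
move=> alpha_ge A0 X0 Y0; have b0 : 0 <= b by lra.
have [C [delta [delta0 expand]]] := force_expansion b0 A0 X0 Y0.
exists (2 * C), delta; split=> // n m y1 y2 e x m0 m1 my1 my2 yY e_small x1X x2X Ax U.
have Ax' : A <= sqnorm x.2 x.1 by rewrite /sqnorm addrC.
have exp1 j := expand e _ _ _ _ e_small Ax x1X x2X (yY j).1 (yY j).2.
have exp2 j := expand e _ _ _ _ e_small Ax' x2X x1X (yY j).2 (yY j).1.
have A2 : 0 < A / 2 by rewrite divr_gt0.
have d1 := is_derive_relpot1 m (lt_le_trans A0 Ax) (fun j => lt_le_trans A2 (exp1 j).1).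
have d2 := is_derive_relpot2 m (lt_le_trans A0 Ax) (fun j => lt_le_trans A2 (exp1 j).1).
split; first by case: d1.
split; first by case: d2.
rewrite !derive1E (@derive_val _ _ _ _ _ _ _ d1) (@derive_val _ _ _ _ _ _ _ d2).
apply: le_trans (enorm_le_normD _ _) _; rewrite -mulrA mulr_natl mulr2n.
apply: lerD.
  apply: (norm_weighted_sum_le m0 m1 (weighted_sum_dforce0 _ _ _ _ my1 my2)) => j.
  exact: (exp1 j).2.
apply: (norm_weighted_sum_le m0 m1 (weighted_sum_dforce0 _ _ _ _ my2 my1)) => j.
exact: (exp2 j).2.
Qed.

End RelativePotential.

Unset Implicit Arguments. Set Strict Implicit.
Theorem proposition2 (R : realType) (n : nat) (alpha : R)
  (m : 'I_n -> R) (q1 q2 : 'I_n -> R -> R) :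
  (2 <= n)%N -> 1 <= alpha ->
  (forall j, 0 < m j) -> \sum_(j < n) m j = 1 ->
  (* q_j is 2pi-periodic *)
  (forall j t, q1 j (t + 2 * pi) = q1 j t /\ q2 j (t + 2 * pi) = q2 j t) ->
  (* collision-free *)
  (forall j k t, j != k -> (q1 j t, q2 j t) != (q1 k t, q2 k t)) ->
  (* solution of the n-body problem *)
  (forall j t,
     derivable (q1 j) t 1 /\ derivable (q2 j) t 1 /\
     derivable (derive1 (q1 j)) t 1 /\ derivable (derive1 (q2 j)) t 1 /\
     derive1 (derive1 (q1 j)) t = - \sum_(k < n | k != j) m k * (q1 j t - q1 k t) /
        (enorm (q1 j t - q1 k t) (q2 j t - q2 k t)) `^ (alpha + 1) /\
     derive1 (derive1 (q2 j)) t = - \sum_(k < n | k != j) m k * (q2 j t - q2 k t) /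
        (enorm (q1 j t - q1 k t) (q2 j t - q2 k t)) `^ (alpha + 1)) ->
  (* center of mass at the origin *)
  (forall t, \sum_(j < n) m j * q1 j t = 0 /\ \sum_(j < n) m j * q2 j t = 0) ->
  (* h is 2pi-periodic in tau *)
  (forall (p q : nat), (0 < p)%N -> (0 < q)%N -> forall (x : R * R) (tau : R),
     hfun alpha m q1 q2 p q x (tau + 2 * pi) = hfun alpha m q1 q2 p q x tau)
  /\
  (* grad_x h = O(eps^2) as eps -> 0, uniformly in tau and x in compacts of R^2 \ {0} *)
  (forall K : set (R^o * R^o)%type, compact K -> ~ K (0, 0) ->
     exists C : R, exists delta : R, 0 < delta /\
       forall (p q : nat), (0 < p)%N -> (0 < q)%N -> eps alpha p q < delta ->
       forall (tau : R) (x : R * R), K x ->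
         derivable (fun s => hfun alpha m q1 q2 p q (s, x.2) tau) x.1 1 /\
         derivable (fun s => hfun alpha m q1 q2 p q (x.1, s) tau) x.2 1 /\
         enorm (derive1 (fun s => hfun alpha m q1 q2 p q (s, x.2) tau) x.1)
               (derive1 (fun s => hfun alpha m q1 q2 p q (x.1, s) tau) x.2)
           <= C * (eps alpha p q) ^+ 2).
Proof.
move=> _ alpha1 m_gt0 m_sum1 q_per _ q_sol q_cm.
have q1P j : periodic (q1 j) (2 * pi) by move=> t; case: (q_per j t).
have q2P j : periodic (q2 j) (2 * pi) by move=> t; case: (q_per j t).
split=> [p q _ q_gt0 x tau|K cK K0]; first exact: hfun_periodic.
have pi2_gt0 : 0 < 2 * pi :> R by rewrite mulr_gt0 ?pi_gt0.
have [B1 B1_ge0 q1B] : exists2 B, 0 <= B & forall j t, `|q1 j t| <= B.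
  apply: periodic_family_bounded pi2_gt0 _ q1P => j t.
  by apply/differentiable_continuous/derivable1_diffP; case: (q_sol j t).
have [B2 B2_ge0 q2B] : exists2 B, 0 <= B & forall j t, `|q2 j t| <= B.
  apply: periodic_family_bounded pi2_gt0 _ q2P => j t.
  by apply/differentiable_continuous/derivable1_diffP; case: (q_sol j t) => _ [].
have [X [A [X_ge0 A_gt0 K_bounds]]] := compact_sqnorm_bounds cK K0.
have [|C [delta [delta_gt0 grad_small]]] :=
  relpot_grad_small (alpha := alpha) (Y := B1 + B2) _ A_gt0 X_ge0 (addr_ge0 B1_ge0 B2_ge0).
  lra.
exists C, delta; split=> // p q _ _ eps_small tau x Kx.
have [x1X x2X Ax] := K_bounds x Kx.
apply: (grad_small n m (fun j => xj1 (q1 j) (q2 j) p q tau)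
  (fun j => xj2 (q1 j) (q2 j) p q tau)) => //.
- by move=> j; exact: ltW.
- by apply: weighted_sum_comb0; case: (q_cm (tau / nu R q)).
- by apply: weighted_sum_comb0; case: (q_cm (tau / nu R q)).
- move=> j; split.
    by apply: le_trans (norm_rotJ1_le _ _ _) _; exact: lerD.
  by apply: le_trans (norm_rotJ2_le _ _ _) _; exact: lerD.
- by rewrite powR_ge0.
Qed.
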